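(* Let $P:\mathcal{C}^{\mathrm{op}}\to\mathbf{Pos}$ be a universal slat-doctrine such that $\mathcal{C}$ has exponents, and consider its existential completion $P^{ex}$, with left adjoints $\exists^{ex}$ and right adjoints $\forall^{ex}$ along product projections. For all objects $A_1,A_2,B$ of $\mathcal{C}$ and every $\alpha\in P(A_1\times A_2\times B)$, $$\forall^{ex}_{\mathrm{pr}_1}\,\exists^{ex}_{\langle\mathrm{pr}_1,\mathrm{pr}_2\rangle}\,\eta_{A_1\times A_2\times B}(\alpha)=\exists^{ex}_{\mathrm{pr}'_1}\,\forall^{ex}_{\langle\mathrm{pr}_1,\mathrm{pr}_3\rangle}\,\eta_{A_1\times A_2\times B^{A_2}}\,P_{\langle\mathrm{pr}_1,\mathrm{pr}_2,\mathrm{ev}\langle\mathrm{pr}_2,\mathrm{pr}_3\rangle\rangle}(\alpha)$$ in $P^{ex}(A_1)$, where: on the left, $\langle\mathrm{pr}_1,\mathrm{pr}_2\rangle:A_1\times A_2\times B\to A_1\times A_2$ and $\mathrm{pr}_1:A_1\times A_2\to A_1$; on the right, $\mathrm{pr}_i$ are the projections of $A_1\times A_2\times B^{A_2}$, $\mathrm{ev}:A_2\times B^{A_2}\to B$ is evaluation, $\langle\mathrm{pr}_1,\mathrm{pr}_3\rangle:A_1\times A_2\times B^{A_2}\to A_1\times B^{A_2}$, and $\mathrm{pr}'_1:A_1\times B^{A_2}\to A_1$.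
   Context: A slat-doctrine is a functor $P:\mathcal{C}^{\mathrm{op}}\to\mathbf{Pos}$ with $\mathcal{C}$ having finite products; $P_f:P(Y)\to P(X)$ is reindexing along $f:X\to Y$. It is existential (resp. universal) if each $P_{\mathrm{pr}_i}:P(A_i)\to P(A_1\times A_2)$ along a product projection has a left adjoint $\exists_{\mathrm{pr}_i}$ (resp. right adjoint $\forall_{\mathrm{pr}_i}$) satisfying Beck–Chevalley: for every pullback of a projection $\mathrm{pr}:X\to A$ along $f:A'\to A$, with resulting projection $\mathrm{pr}':X'\to A'$ and $f':X'\to X$, $\exists_{\mathrm{pr}'}P_{f'}=P_f\exists_{\mathrm{pr}}$ (resp. with $\forall$). Existential completion: $P^{ex}(A)$ is the poset (reflection of the preorder) of triples $(A,B,\alpha)$ with $\alpha\in P(A\times B)$, where $(A,B,\alpha)\le(A,C,\beta)$ iff there is $f:A\times B\to C$ with $\alpha\le P_{\langle\mathrm{pr}_A,f\rangle}(\beta)$; for $f:A\to C$, $P^{ex}_f(C,D,\gamma)=(A,D,P_{f\times 1_D}(\gamma))$. $P^{ex}$ is existential, with $\exists^{ex}_{\mathrm{pr}_1}(A_1\times A_2,B,\beta)=(A_1,A_2\times B,\beta)$, and when $P$ is universal and $\mathcal{C}$ has exponents, $P^{ex}$ is also universal; $\forall^{ex}$ denotes its (unique) right adjoints to reindexing along projections. The map $\eta_A:P(A)\to P^{ex}(A)$ sends $\alpha$ to $(A,1,P_{\mathrm{pr}_A}(\alpha))$, with $\mathrm{pr}_A:A\times 1\to A$. *)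

(* A category with finite products (terminal object + binary products) and
   exponents.  exp A B stands for B^A, with evaluation ev : A x B^A -> B. *)
Record ccc := {
  obj : Type;
  hom : obj -> obj -> Type;
  comp : forall (A B C : obj), hom B C -> hom A B -> hom A C;
  idm : forall A, hom A A;
  comp_id_l : forall A B (f : hom A B), comp A B B (idm B) f = f;
  comp_id_r : forall A B (f : hom A B), comp A A B f (idm A) = f;
  comp_assoc : forall A B C D (f : hom A B) (g : hom B C) (h : hom C D),
      comp A C D h (comp A B C g f) = comp A B D (comp B C D h g) f;
  one : obj;
  bang : forall A, hom A one;
  bang_uniq : forall A (f : hom A one), f = bang A;
  prod : obj -> obj -> obj;
  pr1 : forall A B, hom (prod A B) A;
  pr2 : forall A B, hom (prod A B) B;
  pair : forall X A B, hom X A -> hom X B -> hom X (prod A B);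
  pr1_pair : forall X A B (f : hom X A) (g : hom X B),
      comp X (prod A B) A (pr1 A B) (pair X A B f g) = f;
  pr2_pair : forall X A B (f : hom X A) (g : hom X B),
      comp X (prod A B) B (pr2 A B) (pair X A B f g) = g;
  pair_uniq : forall X A B (h : hom X (prod A B)),
      pair X A B (comp X (prod A B) A (pr1 A B) h)
                 (comp X (prod A B) B (pr2 A B) h) = h;
  exp : obj -> obj -> obj;
  ev : forall A B, hom (prod A (exp A B)) B;
  curry : forall A B C, hom (prod A C) B -> hom C (exp A B);
  ev_curry : forall A B C (h : hom (prod A C) B),
      comp (prod A C) (prod A (exp A B)) B (ev A B)
        (pair (prod A C) A (exp A B) (pr1 A C)
           (comp (prod A C) C (exp A B) (curry A B C h) (pr2 A C))) = h;
  curry_uniq : forall A B C (h : hom (prod A C) B) (k : hom C (exp A B)),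
      comp (prod A C) (prod A (exp A B)) B (ev A B)
        (pair (prod A C) A (exp A B) (pr1 A C)
           (comp (prod A C) C (exp A B) k (pr2 A C))) = h ->
      k = curry A B C h
}.

Arguments hom {c}.
Arguments comp {c A B C}.
Arguments idm {c}.
Arguments one {c}.
Arguments bang {c}.
Arguments prod {c}.
Arguments pr1 {c A B}.
Arguments pr2 {c A B}.
Arguments pair {c X A B}.
Arguments exp {c}.
Arguments ev {c A B}.
Arguments curry {c A B C}.

Definition prodmap {K : ccc} {A A' B B' : obj K} (f : hom A A') (g : hom B B')
  : hom (prod A B) (prod A' B') :=
  pair (comp f pr1) (comp g pr2).

Record doctrine (K : ccc) := {
  PT : obj K -> Type;
  ple : forall A, PT A -> PT A -> Prop;
  ple_refl : forall A (a : PT A), ple A a a;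
  ple_trans : forall A (a b c : PT A), ple A a b -> ple A b c -> ple A a c;
  ple_antisym : forall A (a b : PT A), ple A a b -> ple A b a -> a = b;
  reindex : forall A B, hom A B -> PT B -> PT A;
  reindex_mono : forall A B (f : hom A B) (a b : PT B),
      ple B a b -> ple A (reindex A B f a) (reindex A B f b);
  reindex_id : forall A (a : PT A), reindex A A (idm A) a = a;
  reindex_comp : forall A B C (f : hom A B) (g : hom B C) (a : PT C),
      reindex A C (comp g f) a = reindex A B f (reindex B C g a)
}.

Arguments PT {K}.
Arguments ple {K d A}.
Arguments reindex {K d A B}.

(* P is universal: right adjoints to reindexing along both product
   projections, satisfying Beck-Chevalley for (canonical) pullbacks of
   projections, i.e. along f x 1 (resp. 1 x f). *)
Definition universal {K : ccc} (P : doctrine K) : Prop :=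
  exists (fa1 : forall A1 A2 : obj K, PT P (prod A1 A2) -> PT P A1)
         (fa2 : forall A1 A2 : obj K, PT P (prod A1 A2) -> PT P A2),
    (forall A1 A2 (a : PT P A1) (b : PT P (prod A1 A2)),
        ple (reindex (@pr1 K A1 A2) a) b <-> ple a (fa1 A1 A2 b)) /\
    (forall A1 A2 (a : PT P A2) (b : PT P (prod A1 A2)),
        ple (reindex (@pr2 K A1 A2) a) b <-> ple a (fa2 A1 A2 b)) /\
    (forall A A' B (f : hom A' A) (b : PT P (prod A B)),
        fa1 A' B (reindex (prodmap f (idm B)) b) = reindex f (fa1 A B b)) /\
    (forall A A' B (f : hom A' A) (b : PT P (prod B A)),
        fa2 B A' (reindex (prodmap (idm B) f) b) = reindex f (fa2 B A b)).

(* Representatives of elements of P^ex(A): triples (A, B, alpha). *)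
Definition Pex {K : ccc} (P : doctrine K) (A : obj K) : Type :=
  { B : obj K & PT P (prod A B) }.

Definition exle {K : ccc} {P : doctrine K} {A : obj K} (x y : Pex P A) : Prop :=
  exists f : hom (prod A (projT1 x)) (projT1 y),
    ple (projT2 x) (reindex (pair pr1 f) (projT2 y)).

(* Equality in the poset reflection P^ex(A). *)
Definition exeq {K : ccc} {P : doctrine K} {A : obj K} (x y : Pex P A) : Prop :=
  exle x y /\ exle y x.

Definition Pex_reindex {K : ccc} {P : doctrine K} {A C : obj K} (f : hom A C)
  (x : Pex P C) : Pex P A :=
  existT _ (projT1 x) (reindex (prodmap f (idm (projT1 x))) (projT2 x)).

Definition assoc {K : ccc} (A1 A2 B : obj K)
  : hom (prod A1 (prod A2 B)) (prod (prod A1 A2) B) :=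
  pair (pair pr1 (comp pr1 pr2)) (comp pr2 pr2).

Definition exists_ex {K : ccc} {P : doctrine K} {A1 A2 : obj K}
  (x : Pex P (prod A1 A2)) : Pex P A1 :=
  existT _ (prod A2 (projT1 x)) (reindex (assoc A1 A2 (projT1 x)) (projT2 x)).

Definition eta {K : ccc} {P : doctrine K} {A : obj K} (a : PT P A) : Pex P A :=
  existT _ one (reindex (@pr1 K A one) a).

Definition is_forall_ex {K : ccc} {P : doctrine K} {X Y : obj K} (f : hom X Y)
  (F : Pex P X -> Pex P Y) : Prop :=
  forall (y : Pex P Y) (x : Pex P X),
    exle (Pex_reindex f y) x <-> exle y (F x).


(* Write E := B^{A2} and d(a1, e) := forall a2. alpha(a1, a2, ev(a2, e)) in P(A1 x E).
   Both sides are equal to exists e. eta(d)(a1, e).  On the left this is the choice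
   principle available in P^ex: a witness b for each a2, i.e. a map
   A1 x A2 x C -> B, is curried into a single witness C -> E.  On the right, the
   universal quantifier of P^ex on an element eta(beta) (with trivial witness
   object) is computed in P itself, by Beck-Chevalley. *)

Section CartesianClosed.
Context {K : ccc}.

Lemma comp_assocr {A B C D : obj K} (f : hom A B) (g : hom B C) (h : hom C D) :
  comp (comp h g) f = comp h (comp g f).
Proof. symmetry; apply comp_assoc. Qed.

Lemma pair_comp {X Y A B : obj K} (f : hom Y A) (g : hom Y B) (h : hom X Y) :
  comp (pair f g) h = pair (comp f h) (comp g h).
Proof.
  rewrite <- (pair_uniq K _ _ _ (comp (pair f g) h)).
  rewrite !comp_assoc, pr1_pair, pr2_pair; reflexivity.
Qed.

Lemma pair_pr {A B : obj K} : pair (@pr1 K A B) pr2 = idm (prod A B).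
Proof. rewrite <- (pair_uniq K _ _ _ (idm _)), !comp_id_r; reflexivity. Qed.

Lemma ev_pair_curry {X A B C : obj K} (g : hom (prod A C) B) (k : hom X A) (m : hom X C) :
  comp ev (pair k (comp (curry g) m)) = comp g (pair k m).
Proof.
  pose proof (f_equal (fun u => comp u (pair k m)) (ev_curry K A B C g)) as E; cbn in E.
  rewrite <- E, comp_assocr, pair_comp, comp_assocr, pr1_pair, pr2_pair; reflexivity.
Qed.

End CartesianClosed.

Global Hint Rewrite @comp_assocr @pair_comp @pr1_pair @pr2_pair @comp_id_l @comp_id_r
  @pair_uniq @pair_pr @ev_pair_curry : cat.

Ltac cat_simpl := unfold prodmap, assoc; autorewrite with cat.

Section ExistentialCompletion.
Context {K : ccc} {P : doctrine K}.

Lemma ple_reindex_eq {A B : obj K} (f g : hom A B) (a : PT P B) :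
  f = g -> ple (reindex f a) (reindex g a).
Proof. intros ->; apply ple_refl. Qed.

Ltac reindex_cat := rewrite <- ?reindex_comp; apply ple_reindex_eq; cat_simpl; reflexivity.

Lemma exle_refl {A : obj K} (x : Pex P A) : exle x x.
Proof. exists pr2; rewrite pair_pr, reindex_id; apply ple_refl. Qed.

Lemma exle_trans {A : obj K} (x y z : Pex P A) : exle x y -> exle y z -> exle x z.
Proof.
  destruct x as [X a], y as [Y b], z as [Z c]; intros [f Hf] [g Hg]; cbn in *.
  exists (comp g (pair pr1 f)).
  eapply ple_trans; [exact Hf |].
  eapply ple_trans; [apply reindex_mono; exact Hg |].
  reindex_cat.
Qed.

Lemma exeq_sym {A : obj K} (x y : Pex P A) : exeq x y -> exeq y x.
Proof. intros [Hxy Hyx]; split; assumption. Qed.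

Lemma exeq_trans {A : obj K} (x y z : Pex P A) : exeq x y -> exeq y z -> exeq x z.
Proof.
  intros [Hxy Hyx] [Hyz Hzy]; split; eapply exle_trans; eassumption.
Qed.

Lemma exists_ex_mono {A1 A2 : obj K} (x y : Pex P (prod A1 A2)) :
  exle x y -> exle (exists_ex x) (exists_ex y).
Proof.
  destruct x as [X a], y as [Y b]; intros [f Hf]; cbn in *.
  exists (pair (comp pr1 pr2) (comp f (assoc _ _ _))); cbn.
  eapply ple_trans; [apply reindex_mono; exact Hf |].
  reindex_cat.
Qed.

Lemma exists_ex_exeq {A1 A2 : obj K} (x y : Pex P (prod A1 A2)) :
  exeq x y -> exeq (exists_ex x) (exists_ex y).
Proof. intros [Hxy Hyx]; split; apply exists_ex_mono; assumption. Qed.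

Definition forall_ex_value {X Y : obj K} (f : hom X Y) (x : Pex P X) (g : Pex P Y) : Prop :=
  exle (Pex_reindex f g) x /\ forall y, exle (Pex_reindex f y) x -> exle y g.

Lemma is_forall_ex_value {X Y : obj K} (f : hom X Y) (F : Pex P X -> Pex P Y)
    (x : Pex P X) (g : Pex P Y) :
  is_forall_ex f F -> forall_ex_value f x g -> exeq (F x) g.
Proof.
  intros HF [Hg Hmax]; split.
  - apply Hmax, HF, exle_refl.
  - apply HF, Hg.
Qed.

Section Universal.
Variable fa1 : forall A1 A2 : obj K, PT P (prod A1 A2) -> PT P A1.
Hypothesis fa1_adj : forall A1 A2 (a : PT P A1) (b : PT P (prod A1 A2)),
  ple (reindex (@pr1 K A1 A2) a) b <-> ple a (fa1 A1 A2 b).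
Hypothesis fa1_reindex : forall A A' B (f : hom A' A) (b : PT P (prod A B)),
  fa1 A' B (reindex (prodmap f (idm B)) b) = reindex f (fa1 A B b).

Lemma fa1_counit {X A : obj K} (b : PT P (prod X A)) : ple (reindex pr1 (fa1 X A b)) b.
Proof. apply fa1_adj, ple_refl. Qed.

Lemma ple_reindex_fa1 {Z X A : obj K} (f : hom Z X) (c : PT P Z) (b : PT P (prod X A)) :
  ple (reindex pr1 c) (reindex (prodmap f (idm A)) b) -> ple c (reindex f (fa1 X A b)).
Proof. rewrite <- fa1_reindex; apply fa1_adj. Qed.

(* [p] is a projection up to the retraction [s] of [X x A] onto [Y]. *)
Lemma forall_ex_eta {X A Y : obj K} (p : hom Y X) (s : hom (prod X A) Y) (r : hom Y A)
    (b : PT P Y) :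
  comp p s = pr1 -> comp s (pair p r) = idm Y ->
  forall_ex_value p (eta b) (eta (fa1 X A (reindex s b))).
Proof.
  intros ps sp; split.
  - exists (bang _); cbn.
    apply ple_trans
      with (b := reindex pr1 (reindex (pair p r) (reindex pr1 (fa1 X A (reindex s b))))).
    { reindex_cat. }
    apply ple_trans with (b := reindex pr1 (reindex (pair p r) (reindex s b))).
    { apply reindex_mono, reindex_mono, fa1_counit. }
    rewrite <- !reindex_comp, comp_assoc, sp, comp_id_l, pr1_pair; apply ple_refl.
  - intros [C c] [f Hf]; exists (bang _); cbn in *.
    rewrite <- reindex_comp, pr1_pair.
    apply ple_reindex_fa1.
    set (t := pair (comp s (prodmap pr1 (idm A))) (comp pr2 pr1)
              : hom (prod (prod X C) A) (prod Y C)).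
    apply ple_trans with (b := reindex t (reindex (prodmap p (idm C)) c)).
    { unfold t; rewrite <- reindex_comp; apply ple_reindex_eq; cat_simpl.
      rewrite <- (comp_assocr _ s p), ps; cat_simpl; reflexivity. }
    eapply ple_trans; [apply reindex_mono; exact Hf |].
    unfold t; reindex_cat.
Qed.

(* ((a1, e), a2) |-> ((a1, a2), e a2) *)
Definition choice_map (A1 A2 B : obj K) :
  hom (prod (prod A1 (exp A2 B)) A2) (prod (prod A1 A2) B) :=
  pair (pair (comp pr1 pr1) pr2) (comp ev (pair pr2 (comp pr2 pr1))).

Lemma forall_ex_exists_eta {A1 A2 B : obj K} (a : PT P (prod (prod A1 A2) B)) :
  forall_ex_value (@pr1 K A1 A2) (exists_ex (eta a))
    (exists_ex (eta (fa1 _ A2 (reindex (choice_map A1 A2 B) a)))).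
Proof.
  split.
  - cbn; exists (pair (comp ev (pair (comp pr2 pr1) (comp pr1 pr2))) (bang _)); cbn.
    set (s := pair (pair (comp pr1 pr1) (comp pr1 pr2)) (comp pr2 pr1)
              : hom (prod (prod A1 A2) (prod (exp A2 B) one)) (prod (prod A1 (exp A2 B)) A2)).
    apply ple_trans with (b := reindex s (reindex pr1 (fa1 _ A2 (reindex (choice_map A1 A2 B) a)))).
    { unfold s; reindex_cat. }
    eapply ple_trans; [apply reindex_mono, fa1_counit |].
    unfold s, choice_map; reindex_cat.
  - intros [C c] [f Hf]; cbn in *.
    exists (pair (curry (comp pr1 (comp f (pair (pair (comp pr1 pr2) pr1) (comp pr2 pr2)))))
              (bang _)); cbn.
    rewrite <- !reindex_comp; cat_simpl.
    apply ple_reindex_fa1.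
    set (t := pair (pair (comp pr1 pr1) pr2) (comp pr2 pr1)
              : hom (prod (prod A1 C) A2) (prod (prod A1 A2) C)).
    apply ple_trans with (b := reindex t (reindex (prodmap pr1 (idm C)) c)).
    { unfold t; reindex_cat. }
    eapply ple_trans; [apply reindex_mono; exact Hf |].
    unfold t, choice_map; reindex_cat.
Qed.

End Universal.
End ExistentialCompletion.

Theorem theorem12 (K : ccc) (P : doctrine K) (HU : universal P)
  (A1 A2 B : obj K) (alpha : PT P (prod (prod A1 A2) B))
  (F1 : Pex P (prod A1 A2) -> Pex P A1)
  (F2 : Pex P (prod (prod A1 A2) (exp A2 B)) -> Pex P (prod A1 (exp A2 B))) :
  is_forall_ex (@pr1 K A1 A2) F1 ->
  is_forall_ex (pair (comp pr1 pr1) pr2 :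
                  hom (prod (prod A1 A2) (exp A2 B)) (prod A1 (exp A2 B))) F2 ->
  exeq (F1 (exists_ex (eta alpha)))
       (exists_ex
          (F2 (eta (reindex
                      (pair pr1 (comp ev (pair (comp pr2 pr1) pr2)) :
                         hom (prod (prod A1 A2) (exp A2 B)) (prod (prod A1 A2) B))
                      alpha)))).
Proof.
  intros HF1 HF2.
  destruct HU as (fa1 & _ & fa1_adj & _ & fa1_reindex & _).
  set (d := fa1 _ A2 (reindex (choice_map A1 A2 B) alpha)).
  set (h := pair pr1 (comp ev (pair (comp pr2 pr1) pr2)) :
              hom (prod (prod A1 A2) (exp A2 B)) (prod (prod A1 A2) B)).
  set (s := pair (pair (comp pr1 pr1) pr2) (comp pr2 pr1) :
              hom (prod (prod A1 (exp A2 B)) A2) (prod (prod A1 A2) (exp A2 B))).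
  assert (Hleft : exeq (F1 (exists_ex (eta alpha))) (exists_ex (eta d)))
    by exact (is_forall_ex_value _ _ _ _ HF1 (forall_ex_exists_eta fa1 fa1_adj fa1_reindex alpha)).
  assert (Hd : d = fa1 _ A2 (reindex s (reindex h alpha))).
  { unfold d, s, h, choice_map; rewrite <- reindex_comp; cat_simpl; reflexivity. }
  assert (Hright : exeq (F2 (eta (reindex h alpha))) (eta d)).
  { apply (is_forall_ex_value _ _ _ _ HF2); rewrite Hd.
    apply (forall_ex_eta fa1 fa1_adj fa1_reindex _ _ (comp pr2 pr1));
      unfold s; cat_simpl; reflexivity. }
  exact (exeq_trans _ _ _ Hleft (exeq_sym _ _ (exists_ex_exeq _ _ Hright))).
Qed.
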